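(* Let $(G_n)$ be a sequence of graphs satisfying conditions (1')–(3') below. Then for all sufficiently large $n$, every subset $U\subseteq V$ with $1\le|U|\le\frac{2\overline\lambda^2n}{d^2}$ satisfies $$|N(U)|>\frac{(d-2\overline\lambda)^2}{5\overline\lambda^2}|U|.$$
   Context: $G_n$ has vertex set $V$, $|V|=n$, average degree $d$, minimum degree $\delta$, maximum degree $\Delta$. For $U,W\subseteq V$, $e(U,W)$ is the number of ordered pairs $(u,w)\in U\times W$ with $u$ adjacent to $w$; $N(U)$ is the set of vertices not in $U$ having a neighbor in $U$. A number $\overline\lambda=\overline\lambda(n)>0$ controls the edge distribution of $G_n$ if for all $U,W\subseteq V$: $\left|e(U,W)-\frac{d}{n}|U||W|\right|\le\overline\lambda\sqrt{|U||W|}$. Conditions: there is such $\overline\lambda$ with (1') $\Delta-\delta\le\overline\lambda$; (2') $\frac{d}{\overline\lambda}/\log^2n\to\infty$; (3') $\log d\cdot\log\frac{d}{\overline\lambda}/\log n\to\infty$. *)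

From HB Require Import structures.
From mathcomp Require Import all_boot all_order all_algebra.
From mathcomp Require Import all_classical all_reals.
From mathcomp Require Import exp.
Set Implicit Arguments. Unset Strict Implicit. Unset Printing Implicit Defensive.
Import Order.TTheory GRing.Theory Num.Theory.
Local Open Scope ring_scope.

Definition simple_graph (n : nat) (e : rel 'I_n) : Prop :=
  symmetric e /\ irreflexive e.

Definition deg (n : nat) (e : rel 'I_n) (v : 'I_n) : nat := #|[set w | e v w]|.

Definition max_deg (n : nat) (e : rel 'I_n) : nat := (\max_(v : 'I_n) deg e v)%N.

(* minimum degree; the seed n is never attained when n > 0 since deg <= n-1 *)
Definition min_deg (n : nat) (e : rel 'I_n) : nat :=
  (\big[minn/n]_(v : 'I_n) deg e v)%N.

Definition avg_deg (R : realType) (n : nat) (e : rel 'I_n) : R :=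
  (\sum_(v : 'I_n) deg e v)%N%:R / n%:R.

Definition e_pairs (n : nat) (e : rel 'I_n) (U W : {set 'I_n}) : nat :=
  #|[set p : 'I_n * 'I_n | [&& p.1 \in U, p.2 \in W & e p.1 p.2]]|.

Definition nbhd (n : nat) (e : rel 'I_n) (U : {set 'I_n}) : {set 'I_n} :=
  [set v | (v \notin U) && [exists u in U, e u v]].

Definition controls (R : realType) (n : nat) (e : rel 'I_n) (lam : R) : Prop :=
  forall U W : {set 'I_n},
    `| (e_pairs e U W)%:R - avg_deg R e / n%:R * #|U|%:R * #|W|%:R |
      <= lam * Num.sqrt (#|U|%:R * #|W|%:R).

Definition tends_to_infty (R : realType) (u : nat -> R) : Prop :=
  forall M : R, exists N : nat, forall n : nat, (N <= n)%N -> M < u n.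

(* For a nonempty U, each edge at a vertex
   of U ends in U or in N(U), so
       (d - lam) |U|  <=  sum_{u in U} deg u  <=  e(U,U) + e(U,N(U)),
   where the first inequality uses Delta - delta <= lam (every degree is at
   least delta >= Delta - lam >= d - lam).  The edge-distribution hypothesis
   bounds e(U,U) by d/n |U|^2 + lam |U| and e(U,N(U)) by
   d/n |U||N(U)| + lam sqrt(|U||N(U)|).  When |U| <= 2 lam^2 n / d^2 and
   d >= 20 lam, elementary real arithmetic ([expansion_inequality]) turns
   this into |N(U)| > (d - 2 lam)^2 / (5 lam^2) |U|
   ([small_set_expansion]).  Finally condition (2') forces d / lam to tend to
   infinity ([tends_to_infty_div_ln_sqr]), so d >= 20 lam for all large n,
   which yields [corollary4]. *)

From HB Require Import structures.
From mathcomp Require Import all_boot all_order all_algebra.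
From mathcomp Require Import all_classical all_reals.
From mathcomp Require Import exp.
From mathcomp Require Import ring lra.
Set Implicit Arguments. Unset Strict Implicit. Unset Printing Implicit Defensive.
Import Order.TTheory GRing.Theory Num.Theory.

Section DegreeCounting.
Variables (n : nat) (e : rel 'I_n).

(* Every edge leaving a vertex of U lands either in U or in N(U), so the
   degree sum over U is at most e(U,U) + e(U,N(U)). *)
Lemma sum_deg_le_pairs (U : {set 'I_n}) :
  (\sum_(u in U) deg e u <= e_pairs e U U + e_pairs e U (nbhd e U))%N.
Proof.
have -> : (\sum_(u in U) deg e u
           = #|[set p : 'I_n * 'I_n | (p.1 \in U) && e p.1 p.2]|)%N.
  under eq_bigr => u _ do rewrite /deg -sum1dep_card.
  by rewrite pair_big_dep -sum1dep_card.
apply: leq_trans (leq_card_setU _ _).1.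
apply: subset_leq_card; apply/fintype.subsetP => -[u v]; rewrite !inE /= => /andP[uU uv].
rewrite uU uv /=; case: (boolP (v \in U)) => //= _.
by rewrite andbT; apply/existsP; exists u; rewrite uU.
Qed.

Lemma min_deg_le (v : 'I_n) : (min_deg e <= deg e v)%N.
Proof. by rewrite /min_deg -minEnat; exact: (bigmin_le n v (deg e)). Qed.

Lemma deg_le_max_deg (v : 'I_n) : (deg e v <= max_deg e)%N.
Proof. exact: leq_bigmax. Qed.

End DegreeCounting.

Local Open Scope ring_scope.

Section RealBounds.
Variables (R : realType) (n : nat) (e : rel 'I_n).

Lemma avg_deg_le_max_deg : (0 < n)%N -> avg_deg R e <= (max_deg e)%:R.
Proof.
move=> n_gt0; rewrite /avg_deg ler_pdivrMr ?ltr0n // mulrC -natrM ler_nat.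
apply: leq_trans (_ : \sum_(v : 'I_n) max_deg e <= _)%N.
  by apply: leq_sum => v _; exact: deg_le_max_deg.
by rewrite sum_nat_const card_ord.
Qed.

(* If Delta - delta <= lam, every degree is at least d - lam, hence the
   degree sum over U is at least (d - lam) |U|. *)
Lemma sum_deg_ge (lam : R) (U : {set 'I_n}) :
  (0 < n)%N -> ((max_deg e)%:R - (min_deg e)%:R : R) <= lam ->
  (avg_deg R e - lam) * #|U|%:R <= (\sum_(u in U) deg e u)%N%:R.
Proof.
move=> n_gt0 spread; have d_le_max := avg_deg_le_max_deg n_gt0.
rewrite natr_sum -sum1_card natr_sum mulr_sumr.
apply: ler_sum => u _; rewrite mulr1.
have := min_deg_le e u; rewrite -(ler_nat R) => min_le; lra.
Qed.

Lemma e_pairs_le (lam : R) (U W : {set 'I_n}) : controls e lam ->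
  (e_pairs e U W)%:R
    <= avg_deg R e / n%:R * #|U|%:R * #|W|%:R + lam * Num.sqrt (#|U|%:R * #|W|%:R).
Proof. by move=> /(_ U W); rewrite ler_norml => /andP[_]; rewrite lerBlDl. Qed.

End RealBounds.

Section ExpansionArithmetic.
Variable R : realType.

(* If w <= (d - 2l)^2 / (5 l^2) * u, then the error term l * sqrt(u w) is at
   most (d - 2l) u / sqrt 5 < 9/20 (d - 2l) u. *)
Lemma sqrt_error_le (d l u w s : R) :
  0 < l -> 2 * l <= d -> 0 <= u -> 0 <= s -> s ^+ 2 = u * w ->
  5 * l ^+ 2 * w <= (d - 2 * l) ^+ 2 * u ->
  l * s <= 9 / 20 * (d - 2 * l) * u.
Proof.
move=> l_gt0 dl u_ge0 s_ge0 s_sq w_small.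
have rhs_ge0 : 0 <= 9 / 20 * (d - 2 * l) * u by nra.
rewrite -(ler_pXn2r (n := 2)) ?nnegrE //; last exact: mulr_ge0 (ltW l_gt0) s_ge0.
rewrite !exprMn s_sq; nra.
Qed.

Lemma expansion_inequality (d l n u w : R) :
  0 < l -> 20 * l <= d -> 0 < n -> 0 < u -> 0 <= w ->
  u <= 2 * l ^+ 2 * n / d ^+ 2 ->
  (d - l) * u <= (d / n * u * u + l * u) + (d / n * u * w + l * Num.sqrt (u * w)) ->
  (d - 2 * l) ^+ 2 / (5 * l ^+ 2) * u < w.
Proof.
move=> l_gt0 dl n_gt0 u_gt0 w_ge0 u_small degsum.
have d_gt0 : 0 < d by nra.
set t := d / n * u in degsum *; set s := Num.sqrt (u * w) in degsum *.
have t_ge0 : 0 <= t by rewrite /t !mulr_ge0 ?invr_ge0 // ltW.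
have td_le : t * d <= 2 * l ^+ 2.
  have -> : t * d = u * d ^+ 2 / n by rewrite /t; field; rewrite gt_eqF.
  by rewrite ler_pdivrMr // -ler_pdivlMr ?exprn_gt0.
rewrite ltNge; apply/negP; rewrite mulrAC ler_pdivlMr ?mulr_gt0 ?exprn_gt0 //.
rewrite mulrC => w_small.
have dl2 : 2 * l <= d by lra.
have s_err : l * s <= 9 / 20 * (d - 2 * l) * u.
  apply: sqrt_error_le l_gt0 dl2 (ltW u_gt0) (sqrtr_ge0 _) _ w_small.
  exact: sqr_sqrtr (mulr_ge0 (ltW u_gt0) w_ge0).
have tw_le : t * w * d <= 2 / 5 * (d - 2 * l) ^+ 2 * u.
  have : t * d * (5 * l ^+ 2 * w) <= 2 * l ^+ 2 * ((d - 2 * l) ^+ 2 * u).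
    by apply: ler_pM => //; nra.
  nra.
have tu_le : t * u * d <= 2 * l ^+ 2 * u by nra.
have : (d - 2 * l) * d <= 2 * l ^+ 2 + 2 / 5 * (d - 2 * l) ^+ 2
                          + 9 / 20 * (d - 2 * l) * d.
  rewrite -(ler_pM2r u_gt0); nra.
nra.
Qed.
End ExpansionArithmetic.

Lemma small_set_expansion (R : realType) (n : nat) (e : rel 'I_n) (lam : R)
    (U : {set 'I_n}) :
  0 < lam -> controls e lam ->
  ((max_deg e)%:R - (min_deg e)%:R : R) <= lam ->
  20 * lam <= avg_deg R e ->
  (1 <= #|U|)%N ->
  (#|U|%:R : R) <= 2 * lam ^+ 2 * n%:R / (avg_deg R e) ^+ 2 ->
  (avg_deg R e - 2 * lam) ^+ 2 / (5 * lam ^+ 2) * #|U|%:R < (#|nbhd e U|%:R : R).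
Proof.
move=> lam_gt0 ctrl spread d_large U_gt0 U_small.
have n_gt0 : (0 < n)%N.
  by apply: leq_trans U_gt0 _; rewrite -[X in (_ <= X)%N]card_ord max_card.
apply: expansion_inequality lam_gt0 d_large _ _ _ U_small _ => //.
- by rewrite ltr0n.
- by rewrite ltr0n.
have usq : Num.sqrt (#|U|%:R * #|U|%:R : R) = #|U|%:R by rewrite sqrtr_sqr ger0_norm.
apply: le_trans (sum_deg_ge U n_gt0 spread) _.
have := sum_deg_le_pairs e U; rewrite -(ler_nat R) natrD => /le_trans; apply.
apply: lerD; last exact: e_pairs_le _ _ ctrl.
by rewrite -[X in lam * X]usq; exact: e_pairs_le _ _ ctrl.
Qed.

(* Dividing by (ln n)^2, which is eventually at least (ln 2)^2 > 0, can only
   slow a sequence down: if u n / (ln n)^2 tends to infinity, so does u n. *)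
Lemma tends_to_infty_div_ln_sqr (R : realType) (u : nat -> R) :
  tends_to_infty (fun n => u n / ln (n%:R : R) ^+ 2) -> tends_to_infty u.
Proof.
move=> u_lim M; set c : R := ln 2 ^+ 2.
have ln2_gt0 : 0 < ln (2 : R) by rewrite ln_gt0 // ltr1n.
have c_gt0 : 0 < c by rewrite exprn_gt0.
have [N HN] := u_lim (`|M| / c).
exists (maxn N 2) => n; rewrite geq_max => /andP[nN n2].
have ln_le : ln (2 : R) <= ln (n%:R : R).
  rewrite ler_ln ?posrE ?ltr0n //; last exact: ltnW n2.
  by have := n2; rewrite -(ler_nat R).
have c_le : c <= ln (n%:R : R) ^+ 2 by rewrite /c !expr2 ler_pM // ltW.
have := HN n nN; rewrite ltr_pdivlMr; last exact: lt_le_trans c_gt0 c_le.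
move=> lt_u; apply: (le_lt_trans _ lt_u).
apply: (@le_trans _ _ (`|M| / c * c)); first by rewrite divfK ?gt_eqF //; exact: ler_norm.
by apply: ler_wpM2l c_le; rewrite divr_ge0 // ltW.
Qed.

Theorem corollary4 (R : realType) (G : forall n : nat, rel 'I_n)
  (lam : nat -> R)
  (HG : forall n, simple_graph (G n))
  (Hlam_pos : forall n, 0 < lam n)
  (Hctrl : forall n, controls (G n) (lam n))
  (H1 : forall n, ((max_deg (G n))%:R - (min_deg (G n))%:R : R) <= lam n)
  (H2 : tends_to_infty (fun n => avg_deg R (G n) / lam n / (ln (n%:R : R)) ^+ 2))
  (H3 : tends_to_infty (fun n => ln (avg_deg R (G n)) * ln (avg_deg R (G n) / lam n)
                                  / ln (n%:R : R))) :
  exists N : nat, forall n : nat, (N <= n)%N ->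
    forall U : {set 'I_n},
      (1 <= #|U|)%N ->
      (#|U|%:R : R) <= 2 * lam n ^+ 2 * n%:R / (avg_deg R (G n)) ^+ 2 ->
      (avg_deg R (G n) - 2 * lam n) ^+ 2 / (5 * lam n ^+ 2) * #|U|%:R
        < (#|nbhd (G n) U|%:R : R).
Proof.
have [N d_large] := tends_to_infty_div_ln_sqr H2 20.
exists N => n nN U U_gt0 U_small.
apply: small_set_expansion (Hlam_pos n) (Hctrl n) (H1 n) _ U_gt0 U_small.
by rewrite -ler_pdivlMr //; exact/ltW/d_large.
Qed.
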